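(* Let $d\in\{2,3\}$ and let $|\mu\rangle,|\lambda\rangle,|\bar\mu\rangle,|\bar\lambda\rangle\in\mathbb{C}^d\otimes\mathbb{C}^d$ be normalized states of full Schmidt rank $d$. If $|\mu\rangle\otimes|\lambda\rangle$ can be transformed into $|\bar\mu\rangle\otimes|\bar\lambda\rangle$ by a local unitary, then either ($|\bar\mu\rangle$ is LU-equivalent to $|\mu\rangle$ and $|\bar\lambda\rangle$ is LU-equivalent to $|\lambda\rangle$) or ($|\bar\mu\rangle$ is LU-equivalent to $|\lambda\rangle$ and $|\bar\lambda\rangle$ is LU-equivalent to $|\mu\rangle$).
   Context: The state $|\mu\rangle\otimes|\lambda\rangle$ is regarded as a bipartite state between two parties, each holding two $d$-dimensional subsystems. A local unitary is $U_A\otimes U_B$ with $U_A,U_B\in\mathrm{U}(d^2)$. Two bipartite states are LU-equivalent if and only if their tuples of squared Schmidt coefficients coincide up to reordering. *)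

From HB Require Import structures.
From mathcomp Require Import all_boot all_order all_algebra.
From mathcomp Require Import reals.
From mathcomp.real_closed Require Import complex mxtens.
Set Implicit Arguments. Unset Strict Implicit. Unset Printing Implicit Defensive.
Import Order.TTheory GRing.Theory Num.Theory.
Local Open Scope ring_scope.

(* A pure state |psi> = sum_{i,j} psi i j |i>|j> in C^m (x) C^n, represented
   by its m x n coefficient matrix; C = R[i] with R the real numbers. *)

Definition adjmx (C : numClosedFieldType) m n (A : 'M[C]_(m, n)) : 'M[C]_(n, m) :=
  (map_mx Num.conj A)^T.

Definition unitary (C : numClosedFieldType) n (U : 'M[C]_n) : Prop :=
  U *m adjmx U = 1%:M.

Definition normalized (C : numClosedFieldType) m n (psi : 'M[C]_(m, n)) : Prop :=
  \sum_i \sum_j `|psi i j| ^+ 2 = 1.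

Definition schmidt_rank (C : numClosedFieldType) m n (psi : 'M[C]_(m, n)) : nat :=
  \rank psi.

(* (U_A (x) U_B) |psi> has coefficient matrix U_A *m psi *m U_B^T *)
Definition LU_equiv (C : numClosedFieldType) m n (psi phi : 'M[C]_(m, n)) : Prop :=
  exists (UA : 'M[C]_m) (UB : 'M[C]_n),
    unitary UA /\ unitary UB /\ phi = UA *m psi *m UB^T.

(* |mu> (x) |lambda> viewed as a bipartite state between party A (holding the
   first factors of both) and party B (holding the second factors): its
   coefficient matrix is the Kronecker product. *)
Definition tens_state (C : numClosedFieldType) d (mu lam : 'M[C]_d) : 'M[C]_(d * d) :=
  mu *t lam.

(* The squared Schmidt coefficients of psi are the eigenvalues of its Gram matrix
   psi psi^*.  LU-equivalent states have unitarily similar Gram matrices, and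
   conversely an invertible psi is LU-equivalent to every phi whose Gram matrix has
   the same spectrum.  The Gram matrix of mu (x) lambda is the tensor product of
   those of mu and lambda, so its spectrum is the multiset {a_i b_j} of products of
   their spectra a and b, and the theorem reduces to: for positive probability
   vectors of length d <= 3, the multiset {a_i b_j} determines the pair {a, b}.
   Sort a and b and divide each by its smallest entry, a = a_0 (1, p, q) and
   b = b_0 (1, r, s), where p <= r after possibly swapping a and b.  Then a_0 b_0,
   a_0 b_0 p and a_0 b_0 q s are the smallest, second smallest and largest products,
   the product of all of them determines r, and the first two power sums
   (1 + p + q)(1 + r + s) and (1 + p^2 + q^2)(1 + r^2 + s^2) leave only the two
   matchings of the conclusion. *)

From HB Require Import structures.
From mathcomp Require Import all_boot all_order all_algebra.
From mathcomp Require Import reals.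
From mathcomp.real_closed Require Import complex mxtens.
From mathcomp Require Import fingroup perm.
From mathcomp Require Import ring lra.
Set Implicit Arguments. Unset Strict Implicit. Unset Printing Implicit Defensive.
Import Order.TTheory GRing.Theory Num.Theory.
Local Open Scope ring_scope.
Local Open Scope sesquilinear_scope.

Definition kron (R : pzSemiRingType) (a b : seq R) : seq R :=
  [seq x * y | x <- a, y <- b].

Lemma perm_kronC (R : comPzSemiRingType) (a b : seq R) :
  perm_eq (kron a b) (kron b a).
Proof.
elim: a => [|x a IHa]; first by rewrite /kron allpairs0r.
rewrite /kron allpairs_cons perm_sym.
rewrite (perm_allpairs_consr (fun y z : R => y * z) b (fun=> x) (fun=> a)).
by rewrite perm_cat 1?perm_sym // (eq_map (fun y => mulrC y x)).
Qed.

Lemma kron_map_div (R : fieldType) (a b : seq R) (x0 y0 : R) :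
  kron [seq x / x0 | x <- a] [seq y / y0 | y <- b] =
  [seq z / (x0 * y0) | z <- kron a b].
Proof.
rewrite /kron allpairs_mapl allpairs_mapr map_allpairs.
by apply: eq_allpairs => x y; rewrite invfM mulrACA.
Qed.

Lemma sum_kron_exp (R : comPzSemiRingType) (a b : seq R) k :
  \sum_(z <- kron a b) z ^+ k = (\sum_(x <- a) x ^+ k) * (\sum_(y <- b) y ^+ k).
Proof.
rewrite big_allpairs_dep big_distrl; apply: eq_bigr => x _.
by rewrite big_distrr; apply: eq_bigr => y _; rewrite exprMn.
Qed.

Lemma eq_pair_sum_prod (R : idomainType) (x y x' y' : R) :
  x + y = x' + y' -> x * y = x' * y' ->
  (x = x' /\ y = y') \/ (x = y' /\ y = x').
Proof.
move=> sum_eq prod_eq.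
have : (x - x') * (x - y') = 0.
  have -> : (x - x') * (x - y') = x * (x + y - (x' + y')) - (x * y - x' * y') by ring.
  by rewrite sum_eq prod_eq !subrr mulr0 subr0.
move/eqP; rewrite mulf_eq0 !subr_eq0 => /orP[]/eqP xE; [left|right];
  by split=> //; apply: (addrI x); rewrite sum_eq xE // addrC.
Qed.

Lemma perm_eq_extremum (T : eqType) (r : rel T) (s t : seq T) x y :
  antisymmetric r -> perm_eq s t -> x \in s -> y \in t ->
  all (r x) s -> all (r y) t -> x = y.
Proof.
move=> r_anti st xs yt /allP xr /allP yr; apply: r_anti.
by rewrite xr ?yr // ?(perm_mem st) // -(perm_mem st).
Qed.

Section KronCancel.
Variable R : realFieldType.
Implicit Types p q r s : R.

Lemma kron2_head1 p r p' r' :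
  1 <= p -> p <= r -> 1 <= p' -> p' <= r' ->
  perm_eq (kron [:: 1; p] [:: 1; r]) (kron [:: 1; p'] [:: 1; r']) ->
  p = p' /\ r = r'.
Proof.
move=> p1 pr p1' pr'; rewrite /kron /= !(mul1r, mulr1) perm_cons.
move=> P; have pE : p = p'.
  apply: (perm_eq_extremum le_anti P); rewrite ?inE ?eqxx ?orbT //=;
  rewrite !andbT; apply/and3P; split; nra.
have prE : p * r = p' * r'.
  apply: (perm_eq_extremum ge_anti P); rewrite ?inE ?eqxx ?orbT //=;
  rewrite !andbT; apply/and3P; split; nra.
by split=> //; apply: (mulfI (x := p)); rewrite ?prE ?pE // gt_eqF //; lra.
Qed.

(* The pairs ((1 + p) s, (1 + r) q) and ((1 + p) s', (1 + r) q') have the same sum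
   and product, and so do their analogues with all entries squared. *)
Lemma kron3_head1_solve p r q s q' s' :
  1 <= p -> 1 <= r -> 0 < q -> 0 < s -> 0 < q' -> 0 < s' ->
  q * s = q' * s' ->
  (1 + p + q) * (1 + r + s) = (1 + p + q') * (1 + r + s') ->
  (1 + p ^+ 2 + q ^+ 2) * (1 + r ^+ 2 + s ^+ 2) =
    (1 + p ^+ 2 + q' ^+ 2) * (1 + r ^+ 2 + s' ^+ 2) ->
  (q = q' /\ s = s') \/ (p = r /\ q = s' /\ s = q').
Proof.
move=> p1 r1 q0 s0 q0' s0' qsE sumE sqE.
have sq_qsE : q ^+ 2 * s ^+ 2 = q' ^+ 2 * s' ^+ 2 by rewrite -!exprMn qsE.
have [[sE qE]|[sE qE]] : ((1 + p) * s = (1 + p) * s' /\ (1 + r) * q = (1 + r) * q') \/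
                         ((1 + p) * s = (1 + r) * q' /\ (1 + r) * q = (1 + p) * s').
- apply: eq_pair_sum_prod; first lra.
  by rewrite mulrACA [s * q]mulrC qsE; ring.
- left; split; last by apply: (mulfI (x := 1 + p)) => //; rewrite gt_eqF //; lra.
  by apply: (mulfI (x := 1 + r)) => //; rewrite gt_eqF //; lra.
have [[s2E _]|[s2E _]] :
    ((1 + p ^+ 2) * s ^+ 2 = (1 + p ^+ 2) * s' ^+ 2 /\
     (1 + r ^+ 2) * q ^+ 2 = (1 + r ^+ 2) * q' ^+ 2) \/
    ((1 + p ^+ 2) * s ^+ 2 = (1 + r ^+ 2) * q' ^+ 2 /\
     (1 + r ^+ 2) * q ^+ 2 = (1 + p ^+ 2) * s' ^+ 2).
- apply: eq_pair_sum_prod; first lra.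
  by rewrite mulrACA [s ^+ 2 * _]mulrC sq_qsE; ring.
- have ss' : s = s'.
    apply/eqP; rewrite -(eqrXn2 (n := 2)) ?ltW //; apply/eqP.
    by apply: (mulfI (x := 1 + p ^+ 2)) => //; rewrite gt_eqF //; nra.
  by left; split=> //; apply: (mulIf (x := s)); rewrite ?gt_eqF // qsE ss'.
have /eqP : s ^+ 2 * ((p - r) * (1 - p * r)) = 0.
  have -> : s ^+ 2 * ((p - r) * (1 - p * r)) =
      ((1 + r ^+ 2) * ((1 + p) * s) ^+ 2 - (1 + r) ^+ 2 * ((1 + p ^+ 2) * s ^+ 2)) / 2.
    by field.
  by rewrite sE s2E; field.
rewrite mulf_eq0 sqrf_eq0 gt_eqF //= mulf_eq0 !subr_eq0 => pr.
have pE : p = r by case/orP: pr => /eqP; nra.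
subst r; right; split=> //; split.
  by apply: (mulfI (x := 1 + p)) => //; rewrite gt_eqF //; lra.
by apply: (mulfI (x := 1 + p)) => //; rewrite gt_eqF //; lra.
Qed.

Lemma kron3_head1 p q r s p' q' r' s' :
  1 <= p -> p <= q -> 1 <= r -> r <= s -> 1 <= p' -> p' <= q' -> 1 <= r' -> r' <= s' ->
  p <= r -> p' <= r' ->
  perm_eq (kron [:: 1; p; q] [:: 1; r; s]) (kron [:: 1; p'; q'] [:: 1; r'; s']) ->
  (p = p' /\ q = q' /\ r = r' /\ s = s') \/ (p = r' /\ q = s' /\ r = p' /\ s = q').
Proof.
move=> p1 pq r1 rs p1' pq' r1' rs' pr pr'.
move=> P; have powE k := perm_big _ P : \sum_(z <- _) z ^+ k = \sum_(z <- _) z ^+ k.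
have sumE := powE 1%N; have sqE := powE 2%N.
rewrite !sum_kron_exp !big_cons !big_nil !expr1n !expr1 !addr0 !addrA in sumE sqE.
move: P; rewrite /kron /= !(mul1r, mulr1) perm_cons => P.
have pE : p = p'.
  apply: (perm_eq_extremum le_anti P); rewrite ?inE ?eqxx ?orbT //=;
  rewrite !andbT; repeat (apply/andP; split); nra.
subst p'.
have qsE : q * s = q' * s'.
  apply: (perm_eq_extremum ge_anti P); rewrite ?inE ?eqxx ?orbT //=;
  rewrite !andbT; repeat (apply/andP; split); nra.
have rE : r = r'.
  (* the product of all entries is (p q r s) ^+ 3 *)
  have := perm_big _ P : \prod_(z <- _) z = \prod_(z <- _) z.
  rewrite !big_cons big_nil => prodE.
  have /eqP : (p * q * r * s) ^+ 3 = (p * q' * r' * s') ^+ 3.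
    by apply: etrans (etrans prodE _); ring.
  rewrite eqrXn2 ?mulr_ge0 //; try lra.
  move=> /eqP prodE'.
  have e : p * (q * s) * r = p * (q * s) * r'.
    by rewrite {2}qsE; apply: etrans (etrans prodE' _); ring.
  by apply: (mulfI _ e); rewrite !mulf_neq0 // gt_eqF //; lra.
subst r'.
have [||||[-> ->]|[-> [-> ->]]] := kron3_head1_solve p1 r1 _ _ _ _ qsE sumE sqE;
  by [lra | left | right].
Qed.

Lemma kron_cancel_head1 n (s t s' t' : seq R) :
  (n <= 2)%N -> size s = n -> size t = n -> size s' = n -> size t' = n ->
  sorted <=%R (1 :: s) -> sorted <=%R (1 :: t) ->
  sorted <=%R (1 :: s') -> sorted <=%R (1 :: t') ->
  perm_eq (kron (1 :: s) (1 :: t)) (kron (1 :: s') (1 :: t')) ->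
  (s = s' /\ t = t') \/ (s = t' /\ t = s').
Proof.
move=> n2 ss st ss' st' so_s so_t so_s' so_t'.
wlog le_st : s t ss st so_s so_t / head 1 s <= head 1 t.
  move=> wlog_st; have [|/ltW] := leP (head 1 s) (head 1 t); first exact: wlog_st.
  move=> /(wlog_st t s st ss so_t so_s) + P.
  by rewrite (permPl (perm_kronC _ _)) => /(_ P) [] [-> ->]; [right | left].
wlog le_st' : s' t' ss' st' so_s' so_t' / head 1 s' <= head 1 t'.
  move=> wlog_st; have [|/ltW] := leP (head 1 s') (head 1 t'); first exact: wlog_st.
  move=> /(wlog_st t' s' st' ss' so_t' so_s') + P.
  by rewrite (permPr (perm_kronC _ _)) => /(_ P) [] [-> ->]; [right | left].
case: n n2 ss st ss' st' => [|[|[|//]]] _.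
- by move=> /size0nil-> /size0nil-> /size0nil-> /size0nil->; left.
- case: s t s' t' so_s so_t so_s' so_t' le_st le_st' => [|p []] // [|r []] //
    [|p' []] // [|r' []] //= /andP[p1 _] _ /andP[p1' _] _ pr pr' _ _ _ _ P.
  by have [-> ->] := kron2_head1 p1 pr p1' pr' P; left.
case: s t s' t' so_s so_t so_s' so_t' le_st le_st' => [|p [|q []]] // [|r [|s []]] //
  [|p' [|q' []]] // [|r' [|s' []]] //= /and3P[p1 pq _] /and3P[r1 rs _]
  /and3P[p1' pq' _] /and3P[r1' rs' _] pr pr' _ _ _ _ P.
have [[-> [-> [-> ->]]]|[-> [-> [-> ->]]]] :=
  kron3_head1 p1 pq r1 rs p1' pq' r1' rs' pr pr' P; by [left | right].
Qed.


Lemma head_kron_eq a0 b0 c0 e0 (a b c e : seq R) :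
  0 <= a0 -> 0 <= b0 -> 0 <= c0 -> 0 <= e0 ->
  sorted <=%R (a0 :: a) -> sorted <=%R (b0 :: b) ->
  sorted <=%R (c0 :: c) -> sorted <=%R (e0 :: e) ->
  perm_eq (kron (a0 :: a) (b0 :: b)) (kron (c0 :: c) (e0 :: e)) ->
  a0 * b0 = c0 * e0.
Proof.
have kron_min x0 y0 (s t : seq R) : 0 <= x0 -> 0 <= y0 ->
    sorted <=%R (x0 :: s) -> sorted <=%R (y0 :: t) ->
    all (<=%R (x0 * y0)) (kron (x0 :: s) (y0 :: t)).
  move=> x0_ge0 y0_ge0 /(order_path_min le_trans)/allP so_s.
  move=> /(order_path_min le_trans)/allP so_t; apply/allP => z /allpairsP[[x y] [/= + + ->]].
  rewrite !inE => /predU1P[-> | /so_s x0x] /predU1P[-> | /so_t y0y] //=;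
    by apply: ler_pM.
move=> a0_ge0 b0_ge0 c0_ge0 e0_ge0 so_a so_b so_c so_e P.
apply: (perm_eq_extremum le_anti P); rewrite ?kron_min //;
  by apply: allpairs_f; rewrite mem_head.
Qed.

Lemma map_div_cons x0 (s : seq R) : x0 != 0 ->
  [seq x / x0 | x <- x0 :: s] = 1 :: [seq x / x0 | x <- s].
Proof. by move=> x0_neq0; rewrite /= divff. Qed.

Lemma sorted_map_div x0 (s : seq R) : 0 < x0 -> sorted <=%R (x0 :: s) ->
  sorted <=%R (1 :: [seq x / x0 | x <- s]).
Proof.
move=> x0_gt0; rewrite -map_div_cons ?gt_eqF //; apply: homo_sorted => x y.
by rewrite ler_pM2r ?invr_gt0.
Qed.

Lemma eq_cons_of_map_div x0 y0 (s t : seq R) :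
  x0 != 0 -> y0 != 0 -> \sum_(x <- x0 :: s) x = 1 -> \sum_(y <- y0 :: t) y = 1 ->
  [seq x / x0 | x <- s] = [seq y / y0 | y <- t] -> x0 :: s = y0 :: t.
Proof.
move=> x0_neq0 y0_neq0 sum_s sum_t st.
have : [seq x / x0 | x <- x0 :: s] = [seq y / y0 | y <- y0 :: t].
  by rewrite !map_div_cons // st.
move=> /(congr1 (fun u => \sum_(z <- u) z)); rewrite !big_map -!mulr_suml sum_s sum_t.
rewrite !mul1r => /invr_inj x0E; subst y0; congr cons.
exact: (inj_map (mulIf (invr_neq0 x0_neq0)) st).
Qed.

Lemma kron_cancel_sorted d (a b c e : seq R) : (d <= 3)%N ->
  size a = d -> size b = d -> size c = d -> size e = d ->
  all (fun x => 0 < x) a -> all (fun x => 0 < x) b ->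
  all (fun x => 0 < x) c -> all (fun x => 0 < x) e ->
  \sum_(x <- a) x = 1 -> \sum_(x <- b) x = 1 ->
  \sum_(x <- c) x = 1 -> \sum_(x <- e) x = 1 ->
  sorted <=%R a -> sorted <=%R b -> sorted <=%R c -> sorted <=%R e ->
  perm_eq (kron a b) (kron c e) ->
  (a = c /\ b = e) \/ (a = e /\ b = c).
Proof.
case: d => [|d] d3.
  by move=> /size0nil-> _ _ _ _ _ _ _; rewrite big_nil => /esym/eqP; rewrite oner_eq0.
case: a b c e => [|a0 a] // [|b0 b] // [|c0 c] // [|e0 e] // [sa] [sb] [sc] [se].
move=> /andP[a0_gt0 _] /andP[b0_gt0 _] /andP[c0_gt0 _] /andP[e0_gt0 _] Sa Sb Sc Se.
move=> so_a so_b so_c so_e P.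
have headE := head_kron_eq (ltW a0_gt0) (ltW b0_gt0) (ltW c0_gt0) (ltW e0_gt0)
  so_a so_b so_c so_e P.
have Pu : perm_eq (kron (1 :: [seq x / a0 | x <- a]) (1 :: [seq y / b0 | y <- b]))
                  (kron (1 :: [seq x / c0 | x <- c]) (1 :: [seq y / e0 | y <- e])).
  by rewrite -!map_div_cons ?gt_eqF // !kron_map_div headE perm_map.
have [[ac be]|[ae bc]] := kron_cancel_head1 d3 (etrans (size_map _ _) sa)
  (etrans (size_map _ _) sb) (etrans (size_map _ _) sc) (etrans (size_map _ _) se)
  (sorted_map_div a0_gt0 so_a) (sorted_map_div b0_gt0 so_b)
  (sorted_map_div c0_gt0 so_c) (sorted_map_div e0_gt0 so_e) Pu.
  by left; rewrite (eq_cons_of_map_div _ _ Sa Sc ac) ?(eq_cons_of_map_div _ _ Sb Se be)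
    ?gt_eqF.
by right; rewrite (eq_cons_of_map_div _ _ Sa Se ae) ?(eq_cons_of_map_div _ _ Sb Sc bc)
  ?gt_eqF.
Qed.

Lemma kron_cancel d (a b c e : seq R) : (d <= 3)%N ->
  size a = d -> size b = d -> size c = d -> size e = d ->
  all (fun x => 0 < x) a -> all (fun x => 0 < x) b ->
  all (fun x => 0 < x) c -> all (fun x => 0 < x) e ->
  \sum_(x <- a) x = 1 -> \sum_(x <- b) x = 1 ->
  \sum_(x <- c) x = 1 -> \sum_(x <- e) x = 1 ->
  perm_eq (kron a b) (kron c e) ->
  (perm_eq a c /\ perm_eq b e) \/ (perm_eq a e /\ perm_eq b c).
Proof.
move=> d3 sa sb sc se pa pb pc pe Sa Sb Sc Se P.
have sortK (s : seq R) : perm_eq (sort <=%R s) s by rewrite perm_sort.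
have sort_eqP := perm_sortP le_total le_trans le_anti.
have := @kron_cancel_sorted d (sort <=%R a) (sort <=%R b) (sort <=%R c) (sort <=%R e) d3.
rewrite !size_sort !all_sort !(perm_big _ (sortK _)) !sort_sorted; try exact: le_total.
case=> // [|[/sort_eqP ac /sort_eqP be]|[/sort_eqP ae /sort_eqP bc]]; [|by left|by right].
rewrite (permPl (perm_allpairs _ (sortK a) (sortK b))).
by rewrite (permPr (perm_allpairs _ (sortK c) (sortK e))).
Qed.

End KronCancel.

Lemma char_poly_similar (R : comNzRingType) n (U V A : 'M[R]_n) :
  U *m V = 1%:M -> char_poly (U *m A *m V) = char_poly A.
Proof.
move=> UV; rewrite /char_poly /char_poly_mx.
have UV' : map_mx polyC U *m map_mx polyC V = 1%:M by rewrite -map_mxM UV map_mx1.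
have -> : 'X%:M - map_mx polyC (U *m A *m V) =
          map_mx polyC U *m ('X%:M - map_mx polyC A) *m map_mx polyC V.
  by rewrite mulmxBr mulmxBl !map_mxM mul_mx_scalar -scalemxAl UV' scalemx1.
by rewrite !det_mulmx mulrAC -det_mulmx UV' det1 mul1r.
Qed.

Lemma tens_diag_mx (R : comPzRingType) m n (D : 'rV[R]_m) (E : 'rV[R]_n) :
  diag_mx D *t diag_mx E =
  diag_mx (\row_k (D 0 (mxtens_unindex k).1 * E 0 (mxtens_unindex k).2)).
Proof.
apply/matrixP => i j; case: (mxtens_indexP i) => i1 i2; case: (mxtens_indexP j) => j1 j2.
rewrite tensmxE !mxE mxtens_indexK (can_eq (@mxtens_indexK _ _)) xpair_eqE.
by rewrite /= mulrnAl mulrnAr -mulrnA mulnb andbC.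
Qed.

Section Schmidt.
Variable C : numClosedFieldType.

Lemma adjmxE m n (A : 'M[C]_(m, n)) : adjmx A = A ^t*.
Proof. by rewrite /adjmx map_trmx. Qed.

Lemma unitaryE n (U : 'M[C]_n) : unitary U <-> U \is unitarymx.
Proof. by rewrite /unitary adjmxE; split => /unitarymxP. Qed.

Definition gram m n (psi : 'M[C]_(m, n)) : 'M[C]_m := psi *m psi ^t*.

Definition schmidt_basis m n (psi : 'M[C]_(m, n)) := spectralmx (gram psi).

Definition schmidt_sq m n (psi : 'M[C]_(m, n)) : 'rV[C]_m := spectral_diag (gram psi).

Lemma gram_mull m n p (U : 'M[C]_(p, m)) (psi : 'M[C]_(m, n)) :
  gram (U *m psi) = U *m gram psi *m U ^t*.
Proof. by rewrite /gram trmx_mul map_mxM !mulmxA. Qed.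

Lemma gram_mulr_unitary m n (psi : 'M[C]_(m, n)) (V : 'M[C]_n) :
  V \is unitarymx -> gram (psi *m V) = gram psi.
Proof.
by move=> uV; rewrite /gram trmx_mul map_mxM mulmxA -(mulmxA psi) (unitarymxP uV) mulmx1.
Qed.

Lemma gram_tens m n p q (A : 'M[C]_(m, n)) (B : 'M[C]_(p, q)) :
  gram (A *t B) = gram A *t gram B.
Proof. by rewrite /gram trmx_tens map_mxT tensmx_mul. Qed.

Lemma gram_diagE m n (psi : 'M[C]_(m, n)) i : gram psi i i = \sum_j `|psi i j| ^+ 2.
Proof. by rewrite mxE; apply: eq_bigr => j _; rewrite !mxE normCK. Qed.

Lemma gram_spectral m n (psi : 'M[C]_(m, n)) :
  gram psi = (schmidt_basis psi) ^t* *m diag_mx (schmidt_sq psi) *m schmidt_basis psi.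
Proof.
have /orthomx_spectralP {1}-> : gram psi \is normalmx.
  by apply/normalmxP; rewrite /gram trmx_mul map_mxM trmxCK.
by rewrite invmx_unitary ?spectral_unitarymx.
Qed.

Lemma schmidt_basis_unitary m n (psi : 'M[C]_(m, n)) :
  schmidt_basis psi \is unitarymx.
Proof. exact: spectral_unitarymx. Qed.

Lemma schmidt_basisKV m n (psi : 'M[C]_(m, n)) :
  (schmidt_basis psi) ^t* *m schmidt_basis psi = 1%:M.
Proof. exact/mulmx1C/unitarymxP/schmidt_basis_unitary. Qed.

Lemma gram_mul_schmidt_basis m n (psi : 'M[C]_(m, n)) :
  gram (schmidt_basis psi *m psi) = diag_mx (schmidt_sq psi).
Proof.
rewrite gram_mull gram_spectral !mulmxA (unitarymxP (schmidt_basis_unitary _)) mul1mx.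
by rewrite -mulmxA (unitarymxP (schmidt_basis_unitary _)) mulmx1.
Qed.

Lemma schmidt_sq_ge0 m n (psi : 'M[C]_(m, n)) i : 0 <= schmidt_sq psi 0 i.
Proof.
have /matrixP/(_ i i) := gram_mul_schmidt_basis psi.
rewrite gram_diagE mxE eqxx mulr1n => <-.
by apply: sumr_ge0 => j _; apply: exprn_ge0.
Qed.

Lemma sum_schmidt_sq m n (psi : 'M[C]_(m, n)) :
  \sum_i schmidt_sq psi 0 i = \sum_i \sum_j `|psi i j| ^+ 2.
Proof.
rewrite -mxtrace_diag -gram_mul_schmidt_basis gram_mull mxtrace_mulC mulmxA.
rewrite schmidt_basisKV mul1mx; apply: eq_bigr => i _; exact: gram_diagE.
Qed.

Lemma schmidt_sq_neq0 n (psi : 'M[C]_n) i : psi \in unitmx -> schmidt_sq psi 0 i != 0.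
Proof.
move=> psi_unit; have : diag_mx (schmidt_sq psi) \in unitmx.
  rewrite -gram_mul_schmidt_basis /gram unitmx_mul map_unitmx unitmx_tr andbb.
  by rewrite unitmx_mul psi_unit unitarymx_unit ?schmidt_basis_unitary.
rewrite unitmxE det_diag unitfE; apply: contraNneq => Di0.
by rewrite (bigD1 i) //= Di0 mul0r.
Qed.

Lemma char_poly_gram m n (psi : 'M[C]_(m, n)) :
  char_poly (gram psi) = \prod_i ('X - (schmidt_sq psi 0 i)%:P).
Proof.
rewrite gram_spectral char_poly_similar ?schmidt_basisKV //.
rewrite char_poly_trig ?diag_mx_is_trig //.
by apply: eq_bigr => i _; rewrite mxE eqxx mulr1n.
Qed.

Lemma char_poly_gram_LU m n (psi phi : 'M[C]_(m, n)) :
  LU_equiv psi phi -> char_poly (gram phi) = char_poly (gram psi).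
Proof.
case=> UA [UB [/unitaryE uA [/unitaryE uB ->]]].
rewrite gram_mulr_unitary ?trmx_unitary // gram_mull char_poly_similar //.
exact: unitarymxP.
Qed.

Lemma char_poly_gram_tens m n p q (A : 'M[C]_(m, n)) (B : 'M[C]_(p, q)) :
  char_poly (gram (A *t B)) =
  \prod_i \prod_j ('X - (schmidt_sq A 0 i * schmidt_sq B 0 j)%:P).
Proof.
have tens1 k l : (1%:M : 'M[C]_k) *t (1%:M : 'M[C]_l) = 1%:M.
  rewrite -!diag_const_mx tens_diag_mx; congr diag_mx.
  by apply/rowP => x; rewrite !mxE mulr1.
rewrite gram_tens !gram_spectral -!tensmx_mul char_poly_similar; last first.
  by rewrite tensmx_mul !schmidt_basisKV tens1.
rewrite tens_diag_mx char_poly_trig ?diag_mx_is_trig //.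
rewrite (reindex (@mxtens_index m p)); last first.
  by exists (@mxtens_unindex m p) => k _; [apply: mxtens_indexK | apply: mxtens_unindexK].
rewrite pair_big; apply: eq_bigr => -[i j] _.
by rewrite mxE eqxx mulr1n mxE mxtens_indexK.
Qed.


Lemma perm_mx_unitary n (s : 'S_n) : (perm_mx s : 'M[C]_n) \is unitarymx.
Proof.
by apply/unitarymxP; rewrite tr_perm_mx map_perm_mx -perm_mxM mulgV perm_mx1.
Qed.

Lemma LU_equiv_of_gram_eq n (psi phi V : 'M[C]_n) :
  psi \in unitmx -> V \is unitarymx -> gram phi = gram (V *m psi) -> LU_equiv psi phi.
Proof.
move=> psi_unit uV gramE; set W := invmx psi *m V ^t* *m phi.
have VKV : V ^t* *m V = 1%:M by apply/mulmx1C/unitarymxP.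
exists V, W^T; split; first exact/unitaryE.
split.
  apply/unitaryE; rewrite trmx_unitary; apply/unitarymxP.
  rewrite -/(gram W) gram_mull gramE -gram_mull !mulmxA -(mulmxA _ _ V) VKV mulmx1.
  by rewrite mulVmx // /gram trmx1 map_mx1 mulmx1.
by rewrite trmxK /W !mulmxA mulmxK // (unitarymxP uV) mul1mx.
Qed.

Lemma LU_equiv_of_schmidt_sq_perm n (psi phi : 'M[C]_n) (s : 'S_n) :
  psi \in unitmx -> (forall i, schmidt_sq phi 0 i = schmidt_sq psi 0 (s i)) ->
  LU_equiv psi phi.
Proof.
move=> psi_unit sE; set Q := schmidt_basis phi; set P := schmidt_basis psi.
apply: (@LU_equiv_of_gram_eq _ _ _ (Q ^t* *m perm_mx s *m P)) => //.
  rewrite !mul_unitarymx ?trmxC_unitary ?perm_mx_unitary //;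
  exact: schmidt_basis_unitary.
have diagE : diag_mx (schmidt_sq phi) =
             perm_mx s *m diag_mx (schmidt_sq psi) *m perm_mx s^-1.
  by rewrite -col_permE -row_permE; apply/matrixP => i j; rewrite !mxE !sE (inj_eq perm_inj).
rewrite -mulmxA gram_mull gram_mul_schmidt_basis gram_spectral -/Q diagE.
by rewrite !trmx_mul !map_mxM trmxCK tr_perm_mx map_perm_mx !mulmxA.
Qed.

End Schmidt.

Section SchmidtCoefficients.
Variable R : rcfType.
Local Notation C := R[i].

Definition schmidt_coefs m n (psi : 'M[C]_(m, n)) : m.-tuple R :=
  [tuple complex.Re (schmidt_sq psi 0 i) | i < m].

Lemma schmidt_sqE m n (psi : 'M[C]_(m, n)) i :
  schmidt_sq psi 0 i = (complex.Re (schmidt_sq psi 0 i))%:C%C.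
Proof. by rewrite [LHS]complexE (ger0_Im (schmidt_sq_ge0 _ _)) mulr0 addr0. Qed.

Lemma char_poly_gram_coefs m n (psi : 'M[C]_(m, n)) :
  char_poly (gram psi) = \prod_(z <- [seq x%:C%C | x <- schmidt_coefs psi]) ('X - z%:P).
Proof.
rewrite char_poly_gram !big_map -enumT big_enum /=.
by apply: eq_bigr => i _; rewrite -schmidt_sqE.
Qed.

Lemma perm_schmidt_coefs_LU m n (psi phi : 'M[C]_(m, n)) :
  LU_equiv psi phi -> perm_eq (schmidt_coefs psi) (schmidt_coefs phi).
Proof.
move/char_poly_gram_LU; rewrite !char_poly_gram_coefs.
by move/prod_XsubC_eq/(perm_map_inj (@complexI R)); rewrite perm_sym.
Qed.

Lemma perm_schmidt_coefs_tens m n p q (A : 'M[C]_(m, n)) (B : 'M[C]_(p, q)) :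
  perm_eq (schmidt_coefs (A *t B)) (kron (schmidt_coefs A) (schmidt_coefs B)).
Proof.
apply: (perm_map_inj (@complexI R)); apply: prod_XsubC_eq.
rewrite -char_poly_gram_coefs char_poly_gram_tens big_map big_allpairs_dep big_map big_enum /=.
apply: eq_bigr => i _; rewrite big_map big_enum /=.
apply: eq_bigr => j _; congr ('X - _%:P).
by rewrite rmorphM; congr (_ * _); apply: schmidt_sqE.
Qed.

Lemma schmidt_coefs_gt0 n (psi : 'M[C]_n) :
  psi \in unitmx -> all (fun x => 0 < x) (schmidt_coefs psi).
Proof.
move=> psi_unit; apply/allP => _ /mapP[i _ ->].
rewrite -ltcR -schmidt_sqE lt_def schmidt_sq_ge0 andbT.
exact: schmidt_sq_neq0.
Qed.

Lemma sum_schmidt_coefs m n (psi : 'M[C]_(m, n)) :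
  normalized psi -> \sum_(x <- schmidt_coefs psi) x = 1.
Proof.
move=> psi_norm; apply: (@complexI R); rewrite rmorph_sum big_map big_enum /=.
by under eq_bigr do rewrite -schmidt_sqE; rewrite sum_schmidt_sq.
Qed.

Lemma LU_equiv_of_perm_schmidt_coefs n (psi phi : 'M[C]_n) :
  psi \in unitmx -> perm_eq (schmidt_coefs psi) (schmidt_coefs phi) -> LU_equiv psi phi.
Proof.
rewrite perm_sym => psi_unit /tuple_permP[s /val_inj sE].
apply: (LU_equiv_of_schmidt_sq_perm (s := s)) => // i.
have := congr1 (fun t => tnth t i) sE; rewrite !tnth_mktuple => ReE.
by rewrite schmidt_sqE ReE -schmidt_sqE.
Qed.

End SchmidtCoefficients.

Local Open Scope complex_scope.

Theorem mainTheorem11 (R : realType) (d : nat) (hd : (d == 2)%N || (d == 3)%N)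
    (mu lam mub lamb : 'M[R[i]]_d) :
  normalized mu -> normalized lam -> normalized mub -> normalized lamb ->
  schmidt_rank mu = d -> schmidt_rank lam = d ->
  schmidt_rank mub = d -> schmidt_rank lamb = d ->
  LU_equiv (tens_state mu lam) (tens_state mub lamb) ->
  (LU_equiv mu mub /\ LU_equiv lam lamb) \/
  (LU_equiv lam mub /\ LU_equiv mu lamb).
Proof.
move=> nmu nlam nmub nlamb rmu rlam rmub rlamb /perm_schmidt_coefs_LU P.
have unit (X : 'M[R[i]]_d) : schmidt_rank X = d -> X \in unitmx.
  by rewrite -row_free_unit /row_free /schmidt_rank => ->.
have d3 : (d <= 3)%N by case/orP: hd => /eqP->.
rewrite (permPl (perm_schmidt_coefs_tens _ _)) (permPr (perm_schmidt_coefs_tens _ _)) in P.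
have [[mu_mub lam_lamb]|[mu_lamb lam_mub]] :=
  kron_cancel d3 (size_tuple _) (size_tuple _) (size_tuple _) (size_tuple _)
    (schmidt_coefs_gt0 (unit _ rmu)) (schmidt_coefs_gt0 (unit _ rlam))
    (schmidt_coefs_gt0 (unit _ rmub)) (schmidt_coefs_gt0 (unit _ rlamb))
    (sum_schmidt_coefs nmu) (sum_schmidt_coefs nlam)
    (sum_schmidt_coefs nmub) (sum_schmidt_coefs nlamb) P.
  by left; split; apply: LU_equiv_of_perm_schmidt_coefs; rewrite ?unit.
by right; split; apply: LU_equiv_of_perm_schmidt_coefs; rewrite ?unit.
Qed.
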